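(* Let $\mathbb{F}=\{(W_i,v_i)\}_{i\in I}$ be a Bessel family in a Krein space $\mathbb{K}$, let $M=\overline{\sum_{i\in I}W_i}$ and $M^0=M\cap M^{[\perp]}$. If there exist constants $0<A\leq B$ such that $$A[f,f]\leq\sum_{i\in I}v_i^2\,\big|[\pi_{JM}\pi_{W_i}J\pi_M(f),f]\big|\leq B[f,f]\quad\text{for every } f\in M,$$ then the deficiency subspace $M\ominus M^0$ is a (closed) uniformly $J$-positive subspace of $M$. Moreover, if $\mathbb{F}$ is a fusion frame for the Hilbert space $(M,[\cdot,\cdot]_J)$ and $M\ominus M^0$ is a uniformly $J$-positive subspace, then conversely there exist constants $0<A\leq B$ such that $$A[f,f]\leq\sum_{i\in I}v_i^2\,\big|[\pi_{JM}\pi_{W_i}J\pi_M(f),f]\big|\leq B[f,f]\quad\text{for every } f\in M.$$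
   Context: $(\mathbb{K},[\cdot,\cdot],J)$ is a Krein space with fundamental symmetry $J$ and associated Hilbert space inner product $[f,g]_J=[Jf,g]$, norm $\|\cdot\|_J$. For a closed subspace $X$ of $\mathbb{K}$, $\pi_X$ denotes the orthogonal projection onto $X$ in the Hilbert space $(\mathbb{K},[\cdot,\cdot]_J)$; one has $\pi_{JX}=J\pi_XJ$. $\{W_i\}_{i\in I}$ are closed subspaces of $\mathbb{K}$ and $v_i>0$ are weights; $\mathbb{F}$ is a Bessel family meaning $\sum_{i\in I}v_i^2\|\pi_{W_i}f\|_J^2\leq C\|f\|_J^2$ for some $C>0$ and all $f\in\mathbb{K}$. $M^{[\perp]}$ is the $[\cdot,\cdot]$-orthogonal complement of $M$, $M^0=M\cap M^{[\perp]}$ is the isotropic part of $M$, and $M\ominus M^0=M\cap (M^0)^{\perp}$ (orthogonal complement taken in $(\mathbb{K},[\cdot,\cdot]_J)$). A subspace $N$ is uniformly $J$-positive if there is $\gamma>0$ with $[f,f]\geq\gamma\|f\|_J^2$ for all $f\in N$. $\mathbb{F}$ being a fusion frame for $(M,[\cdot,\cdot]_J)$ means there exist $0<A'\leq B'$ with $A'\|f\|_J^2\leq\sum_{i\in I}v_i^2\|\pi_{W_i}f\|_J^2\leq B'\|f\|_J^2$ for all $f\in M$. *)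

From HB Require Import structures.
From mathcomp Require Import all_boot all_order all_algebra.
From mathcomp Require Import boolp classical_sets reals ereal esum.
From mathcomp Require Import complex.
Set Implicit Arguments. Unset Strict Implicit. Unset Printing Implicit Defensive.
Import Order.TTheory GRing.Theory Num.Theory Num.Def.
Local Open Scope ring_scope.
Local Open Scope classical_set_scope.

Section Krein.
Variables (R : realType) (V : lmodType R[i]).
Variables (ip : V -> V -> R[i]) (J : V -> V).

Definition jip (f g : V) : R[i] := ip (J f) g.
Definition jnorm (f : V) : R := Num.sqrt (complex.Re (jip f f)).

Definition jconverges (u : nat -> V) (x : V) : Prop :=
  forall e : R, 0 < e -> exists N : nat, forall n, (N <= n)%N -> jnorm (u n - x) < e.
Definition jcauchy (u : nat -> V) : Prop :=
  forall e : R, 0 < e -> exists N : nat,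
    forall n m, (N <= n)%N -> (N <= m)%N -> jnorm (u n - u m) < e.

Definition krein_space : Prop :=
  (forall (a : R[i]) (x y z : V), ip (a *: x + y) z = a * ip x z + ip y z) /\
  (forall x y : V, ip y x = conjC (ip x y)) /\
  (forall (a : R[i]) (x y : V), J (a *: x + y) = a *: J x + J y) /\
  (forall x : V, J (J x) = x) /\
  (forall x y : V, ip (J x) y = ip x (J y)) /\
  (forall x : V, x != 0 -> 0 < jip x x) /\
  (forall u : nat -> V, jcauchy u -> exists x, jconverges u x).

Definition subspace (X : set V) : Prop :=
  X 0 /\ forall (a : R[i]) (x y : V), X x -> X y -> X (a *: x + y).
Definition jclosed (X : set V) : Prop :=
  forall (u : nat -> V) (x : V), (forall n, X (u n)) -> jconverges u x -> X x.
Definition closed_subspace (X : set V) : Prop := subspace X /\ jclosed X.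

Definition jclosure (X : set V) : set V :=
  [set f | forall e : R, 0 < e -> exists2 g, X g & jnorm (f - g) < e].

(* pi_X : orthogonal projection onto X in (K, [.,.]_J): the (unique, for X a
   closed subspace) p in X with f - p [.,.]_J-orthogonal to X. *)
Definition proj (X : set V) (f : V) : V :=
  xget 0 [set p | X p /\ forall x, X x -> jip (f - p) x = 0].

Definition Jimage (X : set V) : set V := J @` X.

Definition korth (X : set V) : set V := [set f | forall g, X g -> ip f g = 0].
Definition jorth (X : set V) : set V := [set f | forall g, X g -> jip f g = 0].

Definition isotropic_part (X : set V) : set V := X `&` korth X.
Definition deficiency (X : set V) : set V := X `&` jorth (isotropic_part X).

Definition uniformly_J_positive (N : set V) : Prop :=
  exists2 gamma : R, 0 < gamma &
    forall f, N f -> gamma * jnorm f ^+ 2 <= complex.Re (ip f f).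

Variables (I : choiceType) (W : I -> set V) (v : I -> R).

Definition fusion_sum (f : V) : \bar R :=
  (\esum_(i in [set: I]) ((v i ^+ 2 * jnorm (proj (W i) f) ^+ 2)%:E))%E.

Definition bessel_family : Prop :=
  exists2 C : R, 0 < C & forall f, (fusion_sum f <= (C * jnorm f ^+ 2)%:E)%E.

Definition fusion_frame_for (M : set V) : Prop :=
  exists A' B' : R, [/\ 0 < A', A' <= B' &
    forall f, M f ->
      ((A' * jnorm f ^+ 2)%:E <= fusion_sum f)%E /\
      (fusion_sum f <= (B' * jnorm f ^+ 2)%:E)%E].

Definition sum_span : set V :=
  [set f | exists (n : nat) (idx : 'I_n -> I) (w : 'I_n -> V),
     (forall k, W (idx k) (w k)) /\ f = \sum_(k < n) w k].
Definition closed_sum : set V := jclosure sum_span.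

Definition krein_sum (M : set V) (f : V) : \bar R :=
  (\esum_(i in [set: I])
     ((v i ^+ 2 * complex.Re `| ip (proj (Jimage M) (proj (W i) (J (proj M f)))) f |)%:E))%E.

(* A[f,f] <= sum <= B[f,f] on M ([f,f] is real by Hermitian symmetry) *)
Definition krein_frame_bounds (M : set V) : Prop :=
  exists A B : R, [/\ 0 < A, A <= B &
    forall f, M f ->
      ((A * complex.Re (ip f f))%:E <= krein_sum M f)%E /\
      (krein_sum M f <= (B * complex.Re (ip f f))%:E)%E].

End Krein.

From Pilot Require Import Defs.
From HB Require Import structures.
From mathcomp Require Import all_boot all_order all_algebra.
From mathcomp Require Import boolp classical_sets reals ereal esum.
From mathcomp Require Import complex.
From mathcomp Require Import ring lra.
Import Order.TTheory GRing.Theory Num.Theory Normc.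
Local Open Scope ring_scope.
Local Open Scope classical_set_scope.
Set Implicit Arguments. Unset Strict Implicit.

(* On M the indefinite product is represented by the Gram operator G = pi_M J:
   [f, g] = [G f, g]_J for f, g in M.  Since W_i is contained in M, the summand
   [pi_{JM} pi_{W_i} J pi_M f, f] equals ||pi_{W_i} G f||_J^2, so the Krein
   frame sum at f is the fusion frame sum at G f.  The kernel of G on M is the
   isotropic part M^0, and M minus M^0 lies in the closure of the range of G.
   Both directions then compare [f, f] with ||G f||_J^2 through the
   Cauchy-Schwarz inequality for the nonnegative form [.,.] on M.  Given frame
   bounds, the lower bound and the Bessel bound give A ||g||_J^2 <= C [g, g] on
   the range of G, hence on its closure by continuity.  Conversely, after
   discarding the isotropic component of f in M, uniform positivity gamma of
   M minus M^0 yields gamma [f, f] <= ||G f||_J^2 <= [f, f], and the fusion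
   frame bounds transfer. *)

Local Notation Re := complex.Re.
Local Notation Im := complex.Im.

Section RealFacts.
Variable R : realType.

Lemma le0_eps_mul (a K : R) : 0 <= K -> (forall e, 0 < e -> a <= e * K) -> a <= 0.
Proof.
move=> K0 small; apply/ler_addgt0Pr => e e0; rewrite add0r.
have K1 : 0 < K + 1 by lra.
have := small _ (divr_gt0 e0 K1); rewrite -mulrA => /le_trans; apply.
by rewrite ger_pMr // ler_pdivrMl // mulr1; lra.
Qed.

Lemma exists_invSn_lt (e : R) : 0 < e -> exists N : nat, N.+1%:R^-1 < e.
Proof.
move=> e0; exists (Num.Def.archi_bound e^-1).
have eV : 0 <= e^-1 by rewrite invr_ge0 ltW.
have := archi_boundP eV; set n := Num.Def.archi_bound _ => lt_n.
rewrite -[e]invrK ltf_pV2 ?posrE ?invr_gt0 ?ltr0Sn //.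
by apply: lt_trans lt_n _; rewrite ltr_nat.
Qed.

Lemma invSn_le (m n : nat) : (m <= n)%N -> n.+1%:R^-1 <= m.+1%:R^-1 :> R.
Proof. by move=> mn; rewrite lef_pV2 ?posrE ?ltr0Sn // ler_nat. Qed.

Lemma ge0_quadratic_discr (a b c : R) : 0 <= c ->
  (forall r, 0 <= a - 2 * r * b + r ^+ 2 * c) -> b ^+ 2 <= a * c.
Proof.
move=> c0 pos; have a0 : 0 <= a.
  by have := pos 0; rewrite !(mul0r, mulr0, expr0n) /=; lra.
have [c_gt0|] := ltrP 0 c.
  have cV : c * c^-1 = 1 by rewrite mulfV // gt_eqF.
  have := mulr_ge0 (ltW c_gt0) (pos (b / c)); nra.
move=> c_le0; have -> : c = 0 by apply/le_anti; rewrite c_le0 c0.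
rewrite mulr0; have [-> |b0] := eqVneq b 0; first by rewrite expr0n.
have := pos ((a + 1) / (2 * b)); set r := (a + 1) / (2 * b) => hr.
have rb : r * (2 * b) = a + 1 by rewrite /r mulfVK // mulf_neq0 // pnatr_eq0.
nra.
Qed.

End RealFacts.

Section ComplexModulus.
Variable R : realType.
Implicit Types (z : R[i]) (r : R).

Lemma normc_ge0 z : 0 <= normc z.
Proof. by case: z => a b; apply: sqrtr_ge0. Qed.

Lemma sqr_normcE z : normc z ^+ 2 = Re z ^+ 2 + Im z ^+ 2.
Proof. by case: z => a b /=; rewrite sqr_sqrtr // addr_ge0 ?sqr_ge0. Qed.

Lemma mulcJ z : z * z^* = (normc z ^+ 2)%:C%C.
Proof.
rewrite sqr_normcE; case: z => a b; apply/eqP.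
by rewrite eq_complex /= !expr2; apply/andP; split; apply/eqP; ring.
Qed.

Lemma Re_le_normc z : `|Re z| <= normc z.
Proof.
rewrite -(@ler_pXn2r _ 2) ?nnegrE ?normc_ge0 // sqr_normcE real_normK ?num_real //.
by rewrite lerDl sqr_ge0.
Qed.

Lemma Re_conjC z : Re z^* = Re z. Proof. by case: z. Qed.

Lemma Re_realM r z : Re (r%:C%C * z) = r * Re z.
Proof. by case: z => a b /=; rewrite mul0r subr0. Qed.

Lemma conjC_real r : (r%:C%C)^* = r%:C%C.
Proof. by apply/eqP; rewrite eq_complex /= oppr0 !eqxx. Qed.

Lemma normc_real r : 0 <= r -> normc r%:C%C = r.
Proof. by move=> r0; rewrite /= expr0n addr0 sqrtr_sqr ger0_norm. Qed.

End ComplexModulus.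

Section HermitianForm.
Variables (R : realType) (V : lmodType R[i]) (F : V -> V -> R[i]).
Hypothesis formDZl : forall a x y z, F (a *: x + y) z = a * F x z + F y z.
Hypothesis formC : forall x y, F y x = (F x y)^*.

Lemma form0l z : F 0 z = 0.
Proof.
have := formDZl 1 0 0 z; rewrite scale1r addr0 mul1r => h.
by apply: (addrI (F 0 z)); rewrite addr0 -h.
Qed.

Lemma formZl a x z : F (a *: x) z = a * F x z.
Proof. by have := formDZl a x 0 z; rewrite addr0 form0l addr0. Qed.

Lemma formDl x y z : F (x + y) z = F x z + F y z.
Proof. by have := formDZl 1 x y z; rewrite scale1r mul1r. Qed.

Lemma formNl x z : F (- x) z = - F x z.
Proof. by rewrite -scaleN1r formZl mulN1r. Qed.

Lemma formBl x y z : F (x - y) z = F x z - F y z.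
Proof. by rewrite formDl formNl. Qed.

Lemma form0r z : F z 0 = 0.
Proof. by rewrite formC form0l conjC0. Qed.

Lemma formZr a x z : F z (a *: x) = a^* * F z x.
Proof. by rewrite formC formZl rmorphM /= -formC. Qed.

Lemma formDr x y z : F z (x + y) = F z x + F z y.
Proof. by rewrite formC formDl rmorphD /= -!formC. Qed.

Lemma formNr x z : F z (- x) = - F z x.
Proof. by rewrite formC formNl rmorphN /= -formC. Qed.

Lemma formBr x y z : F z (x - y) = F z x - F z y.
Proof. by rewrite formDr formNr. Qed.

Lemma Re_formC x y : Re (F y x) = Re (F x y).
Proof. by rewrite formC Re_conjC. Qed.

Lemma Re_form_CauchySchwarz (X : set V) x y : Defs.subspace X ->
  (forall w, X w -> 0 <= Re (F w w)) -> X x -> X y ->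
  Re (F x y) ^+ 2 <= Re (F x x) * Re (F y y).
Proof.
move=> [_ XDZ] pos Xx Xy; apply: ge0_quadratic_discr; first exact: pos.
move=> r; have Xr : X (x - r%:C%C *: y) by rewrite addrC -scaleNr; apply: XDZ.
have := pos _ Xr; rewrite formBl !formBr !formZl !formZr !raddfB /=.
rewrite conjC_real !Re_realM [Re (F y x)]Re_formC opprK.
nra.
Qed.

End HermitianForm.

Section KreinSpace.
Variables (R : realType) (V : lmodType R[i]) (ip : V -> V -> R[i]) (J : V -> V).
Hypothesis HK : krein_space ip J.
Local Notation jp := (jip ip J).
Local Notation nrm := (jnorm ip J).

Lemma ipDZl a x y z : ip (a *: x + y) z = a * ip x z + ip y z.
Proof. by case: HK => h _; apply: h. Qed.

Lemma ipC x y : ip y x = (ip x y)^*.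
Proof. by case: HK => _ [h _]; apply: h. Qed.

Lemma JDZ a x y : J (a *: x + y) = a *: J x + J y.
Proof. by case: HK => _ [_ [h _]]; apply: h. Qed.

Lemma JK : involutive J.
Proof. by case: HK => _ [_ [_ [h _]]]. Qed.

Lemma ipJ x y : ip (J x) y = ip x (J y).
Proof. by case: HK => _ [_ [_ [_ [h _]]]]; apply: h. Qed.

Lemma jip_gt0 x : x != 0 -> 0 < jp x x.
Proof. by case: HK => _ [_ [_ [_ [_ [h _]]]]]; apply: h. Qed.

Lemma jcauchy_cvg u : jcauchy ip J u -> exists x, jconverges ip J u x.
Proof. by case: HK => _ [_ [_ [_ [_ [_ h]]]]]; apply: h. Qed.

Lemma J0 : J 0 = 0.
Proof.
have := JDZ 1 0 0; rewrite scale1r !addr0 scale1r => h.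
by apply: (addrI (J 0)); rewrite addr0 -h.
Qed.

Lemma JB x y : J (x - y) = J x - J y.
Proof. by rewrite -[x - y]addrC -scaleN1r JDZ scaleN1r addrC. Qed.

Lemma jipDZl a x y z : jp (a *: x + y) z = a * jp x z + jp y z.
Proof. by rewrite /jip JDZ ipDZl. Qed.

Lemma jipC x y : jp y x = (jp x y)^*.
Proof. by rewrite /jip ipC ipJ. Qed.

Lemma ip_jip x y : ip x y = jp (J x) y.
Proof. by rewrite /jip JK. Qed.

Lemma jipJ x y : jp (J x) (J y) = jp x y.
Proof. by rewrite /jip JK ipJ. Qed.

Lemma jip_ge0 x : 0 <= jp x x.
Proof. by have [->|/jip_gt0/ltW //] := eqVneq x 0; rewrite (form0l jipDZl). Qed.

Lemma jip_eq0 x : jp x x = 0 -> x = 0.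
Proof. by have [//|/jip_gt0] := eqVneq x 0; rewrite lt0r => /andP[/eqP]. Qed.

Lemma sqr_jnorm x : nrm x ^+ 2 = Re (jp x x).
Proof. by rewrite sqr_sqrtr // -lecR (RRe_real (ger0_real (jip_ge0 x))) jip_ge0. Qed.

Lemma jip_sqr_jnorm x : jp x x = (nrm x ^+ 2)%:C%C.
Proof. by rewrite sqr_jnorm (RRe_real (ger0_real (jip_ge0 x))). Qed.

Lemma jnorm_ge0 x : 0 <= nrm x.
Proof. exact: sqrtr_ge0. Qed.

Lemma jnorm_eq0 x : nrm x = 0 -> x = 0.
Proof. by move=> x0; apply: jip_eq0; rewrite jip_sqr_jnorm x0 expr0n. Qed.

Lemma jnorm0 : nrm 0 = 0.
Proof. by rewrite /jnorm (form0r jipDZl jipC) sqrtr0. Qed.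

Lemma jnormJ x : nrm (J x) = nrm x.
Proof. by rewrite /jnorm jipJ. Qed.

Lemma jnormZ a x : nrm (a *: x) = normc a * nrm x.
Proof.
apply/eqP; rewrite -(@eqrXn2 _ 2) ?mulr_ge0 ?normc_ge0 ?jnorm_ge0 //.
rewrite exprMn !sqr_jnorm (formZl jipDZl) (formZr jipDZl jipC) mulrA mulcJ.
by rewrite jip_sqr_jnorm -rmorphM.
Qed.

Lemma jnormN x : nrm (- x) = nrm x.
Proof. by rewrite -scaleN1r jnormZ normcN normc1 mul1r. Qed.

Lemma jdistC x y : nrm (x - y) = nrm (y - x).
Proof. by rewrite -jnormN opprB. Qed.

Lemma sqr_jnormD x y : nrm (x + y) ^+ 2 = nrm x ^+ 2 + 2 * Re (jp x y) + nrm y ^+ 2.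
Proof.
rewrite !sqr_jnorm (formDl jipDZl) !(formDr jipDZl jipC) !raddfD /=.
by rewrite [Re (jp y x)](Re_formC jipC); ring.
Qed.

Lemma Re_jip_le x y : `|Re (jp x y)| <= nrm x * nrm y.
Proof.
have sT : Defs.subspace [set: V] by [].
rewrite -(@ler_pXn2r _ 2) ?nnegrE ?mulr_ge0 ?jnorm_ge0 //.
rewrite real_normK ?num_real // exprMn !sqr_jnorm.
by apply: (Re_form_CauchySchwarz jipDZl jipC sT) => // w _; rewrite -sqr_jnorm sqr_ge0.
Qed.

Lemma normc_jip_le x y : normc (jp x y) <= nrm x * nrm y.
Proof.
set z := jp x y; have := Re_jip_le (z^* *: x) y.
rewrite (formZl jipDZl) -/z mulrC mulcJ /= jnormZ.
have -> : normc z^* = normc z by case: z => a b /=; rewrite sqrrN.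
rewrite ger0_norm ?sqr_ge0 // expr2 -mulrA.
have [z0|z_gt0] := eqVneq (normc z) 0; first by rewrite z0 mulr_ge0 ?jnorm_ge0.
by rewrite ler_pM2l // lt0r z_gt0 normc_ge0.
Qed.

Lemma normc_ip_le x y : normc (ip x y) <= nrm x * nrm y.
Proof. by rewrite ip_jip -(jnormJ x); apply: normc_jip_le. Qed.

Lemma ler_jnormD x y : nrm (x + y) <= nrm x + nrm y.
Proof.
rewrite -(@ler_pXn2r _ 2) ?nnegrE ?addr_ge0 ?jnorm_ge0 // sqr_jnormD.
have := Re_jip_le x y; rewrite ler_norml => /andP[_ h]; nra.
Qed.

Lemma jnorm_parallelogram x y :
  nrm (x + y) ^+ 2 + nrm (x - y) ^+ 2 = 2 * nrm x ^+ 2 + 2 * nrm y ^+ 2.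
Proof. by rewrite !sqr_jnormD jnormN (formNr jipDZl jipC) raddfN /=; ring. Qed.

End KreinSpace.

Section ClosedSubspaces.
Variables (R : realType) (V : lmodType R[i]) (ip : V -> V -> R[i]) (J : V -> V).
Hypothesis HK : krein_space ip J.
Local Notation nrm := (jnorm ip J).

Lemma sub_jclosure S : S `<=` jclosure ip J S.
Proof. by move=> f Sf e e0; exists f => //; rewrite subrr jnorm0. Qed.

Lemma jclosure_closed S : jclosed ip J (jclosure ip J S).
Proof.
move=> u x Su ux e e0; have e2 : 0 < e / 2 by rewrite divr_gt0.
have [N uN] := ux _ e2; have [g Sg ug] := Su N _ e2.
exists g => //; have xu : nrm (x - u N) < e / 2 by rewrite (jdistC HK) uN.
have := ler_jnormD HK (x - u N) (u N - g); rewrite addrA subrK; lra.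
Qed.

Lemma jclosure_min S Y : S `<=` Y -> jclosed ip J Y -> jclosure ip J S `<=` Y.
Proof.
move=> SY cY f Sf.
have /choice [g Sg] n : exists g, S g /\ nrm (f - g) < n.+1%:R^-1.
  have n_gt0 : 0 < n.+1%:R^-1 :> R by rewrite invr_gt0 ltr0Sn.
  by have [g ? ?] := Sf _ n_gt0; exists g.
apply: (cY g); first by move=> n; apply: SY; case: (Sg n).
move=> e e0; have [N Ne] := exists_invSn_lt e0; exists N => n Nn.
rewrite jdistC //; apply: lt_trans (proj2 (Sg n)) _.
exact: le_lt_trans (invSn_le _ Nn) Ne.
Qed.

Lemma jclosure_subspace S : Defs.subspace S -> Defs.subspace (jclosure ip J S).
Proof.
move=> [S0 SDZ]; split; first exact: sub_jclosure.
move=> a x y Sx Sy e e0; set K := normc a + 1.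
have K0 : 0 < K by rewrite ltr_wpDl ?normc_ge0.
have [x' Sx' xx'] := Sx _ (divr_gt0 (divr_gt0 e0 (ltr0Sn R 1)) K0).
have [y' Sy' yy'] := Sy _ (divr_gt0 e0 (ltr0Sn R 1)).
exists (a *: x' + y'); first exact: SDZ.
have -> : a *: x + y - (a *: x' + y') = a *: (x - x') + (y - y').
  by rewrite scalerBr opprD addrACA.
apply: le_lt_trans (ler_jnormD HK _ _) _; rewrite jnormZ //.
have : normc a * nrm (x - x') <= K * nrm (x - x').
  by rewrite ler_wpM2r ?jnorm_ge0 // lerDl.
move: xx'; rewrite ltr_pdivlMr // => xx'; nra.
Qed.

Lemma closed_subspaceI X Y : closed_subspace ip J X -> closed_subspace ip J Y ->
  closed_subspace ip J (X `&` Y).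
Proof.
move=> [[X0 XDZ] cX] [[Y0 YDZ] cY]; split; first split => //.
  by move=> a x y [? ?] [? ?]; split; [apply: XDZ | apply: YDZ].
by move=> u x XYu ux; split; [apply: (cX u) | apply: (cY u)] => // n; case: (XYu n).
Qed.

Lemma Jimage_closed_subspace X : closed_subspace ip J X ->
  closed_subspace ip J (Jimage J X).
Proof.
move=> [[X0 XDZ] cX]; split; first split.
- by exists 0 => //; rewrite (J0 HK).
- move=> a _ _ [x Xx <-] [y Xy <-]; exists (a *: x + y); first exact: XDZ.
  by rewrite (JDZ HK).
move=> u x Xu ux; exists (J x); last by rewrite (JK HK).
apply: (cX (J \o u)); first by move=> n /=; case: (Xu n) => w Xw <-; rewrite (JK HK).
move=> e e0; have [N uN] := ux e e0; exists N => n /uN.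
by rewrite /= -(JB HK) (jnormJ HK).
Qed.

Section BoundedForm.
Variable F : V -> V -> R[i].
Hypothesis FDZl : forall a x y z, F (a *: x + y) z = a * F x z + F y z.
Hypothesis F_bounded : forall x y, normc (F x y) <= nrm x * nrm y.

Lemma korth_closed_subspace X : closed_subspace ip J (korth F X).
Proof.
split; first split.
- by move=> g _; rewrite (form0l FDZl).
- by move=> a x y Xx Xy g Xg; rewrite FDZl Xx // Xy // mulr0 addr0.
move=> u x Xu ux g Xg; apply/eq0_normc/le_anti; rewrite normc_ge0 andbT.
apply: (le0_eps_mul (jnorm_ge0 ip J g)) => e e0.
have [N uN] := ux e e0; have := uN N (leqnn N).
have -> : F x g = - F (u N - x) g by rewrite (formBl FDZl) Xu // sub0r opprK.
rewrite normcN => /ltW /(ler_wpM2r (jnorm_ge0 ip J g)).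
exact: le_trans (F_bounded _ _).
Qed.

Hypothesis FC : forall x y, F y x = (F x y)^*.

Lemma Re_form_diag_lipschitz f g :
  `|Re (F f f) - Re (F g g)| <= nrm (f - g) * (nrm f + nrm g).
Proof.
rewrite -raddfB /=.
have -> : F f f - F g g = F (f - g) f + F g (f - g).
  by rewrite (formBl FDZl) (formBr FDZl FC) addrA subrK.
rewrite raddfD /= mulrDr [nrm (f - g) * nrm g]mulrC.
apply: le_trans (ler_normD _ _) (lerD _ _); apply: le_trans (Re_le_normc _) _;
  exact: F_bounded.
Qed.

End BoundedForm.

Lemma jclosure_le0 (q : V -> R) (L : R) (S : set V) : 0 <= L ->
  (forall f g, q f - q g <= L * nrm (f - g) * (nrm f + nrm g)) ->
  (forall g, S g -> q g <= 0) -> forall f, jclosure ip J S f -> q f <= 0.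
Proof.
move=> L0 q_lip Sq f Sf.
have K0 : 0 <= L * (2 * nrm f + 1) by rewrite mulr_ge0 ?addr_ge0 ?mulr_ge0 ?jnorm_ge0.
apply: (le0_eps_mul K0) => e e0.
have m0 : 0 < Num.min e 1 by rewrite lt_min e0 ltr01.
have [g Sg] := Sf _ m0.
rewrite lt_min => /andP[fge fg1].
have ng : nrm g <= nrm f + 1.
  have := ler_jnormD HK f (g - f); rewrite addrC subrK (jdistC HK g); lra.
have : nrm (f - g) * (nrm f + nrm g) <= e * (2 * nrm f + 1).
  have := jnorm_ge0 ip J f; have := jnorm_ge0 ip J g; have := jnorm_ge0 ip J (f - g); nra.
move=> /(ler_wpM2l L0); have := q_lip f g; have := Sq g Sg; nra.
Qed.

End ClosedSubspaces.

Section Projection.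
Variables (R : realType) (V : lmodType R[i]) (ip : V -> V -> R[i]) (J : V -> V).
Hypothesis HK : krein_space ip J.
Local Notation jp := (jip ip J).
Local Notation nrm := (jnorm ip J).

Definition is_proj (X : set V) (f p : V) : Prop :=
  X p /\ forall x, X x -> jp (f - p) x = 0.

Lemma sqr_jnorm_sub_line h y : nrm y != 0 ->
  let t := ((nrm y ^+ 2)^-1)%:C%C * jp h y in
  nrm (h - t *: y) ^+ 2 = nrm h ^+ 2 - normc (jp h y) ^+ 2 / nrm y ^+ 2.
Proof.
move=> y0 t; set q := nrm y ^+ 2; set z := jp h y.
have q0 : q != 0 by rewrite expf_neq0.
have Et : t^* * z = (q^-1 * normc z ^+ 2)%:C%C.
  by rewrite rmorphM /= conjC_real -mulrA [_^* * _]mulrC mulcJ -rmorphM.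
have Nt : normc t = q^-1 * normc z.
  by rewrite normcM normc_real // invr_ge0 sqr_ge0.
rewrite sqr_jnormD // (formNr (jipDZl HK) (jipC HK)) (formZr (jipDZl HK) (jipC HK)).
rewrite -/z Et raddfN /= jnormN // jnormZ // Nt -/q exprMn -/q.
by field.
Qed.

Lemma minimizer_jorth (X : set V) f p y : Defs.subspace X -> X p -> X y ->
  (forall w, X w -> nrm (f - p) <= nrm (f - w)) -> jp (f - p) y = 0.
Proof.
move=> [_ XDZ] Xp Xy pmin.
have [y0|y0] := eqVneq (nrm y) 0.
  by rewrite (jnorm_eq0 HK y0) (form0r (jipDZl HK) (jipC HK)).
suff : normc (jp (f - p) y) ^+ 2 <= 0.
  by rewrite le_eqVlt ltNge sqr_ge0 orbF sqrf_eq0 => /eqP/eq0_normc.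
set t := ((nrm y ^+ 2)^-1)%:C%C * jp (f - p) y.
have h : nrm (f - p) ^+ 2 <= nrm (f - p - t *: y) ^+ 2.
  rewrite ler_pXn2r ?nnegrE ?jnorm_ge0 //.
  by rewrite -addrA -opprD [p + _]addrC; apply: pmin; apply: XDZ.
rewrite /t sqr_jnorm_sub_line // in h.
have q_gt0 : 0 < nrm y ^+ 2 by rewrite exprn_gt0 // lt0r y0 jnorm_ge0.
have : normc (jp (f - p) y) ^+ 2 / nrm y ^+ 2 <= 0 by lra.
by rewrite pmulr_lle0 // invr_gt0.
Qed.

Lemma minimizing_jcauchy (X : set V) f (d : R) (u : nat -> V) : Defs.subspace X ->
  0 <= d -> (forall w, X w -> d <= nrm (f - w)) -> (forall n, X (u n)) ->
  (forall n, nrm (f - u n) <= d + n.+1%:R^-1) -> jcauchy ip J u.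
Proof.
move=> [X0 XDZ] d0 dmin Xu ud.
have eps01 n : 0 < (n.+1%:R^-1 : R) <= 1.
  by rewrite invr_gt0 ltr0Sn invf_le1 ?ltr0Sn // ler1n.
have gap n m : nrm (u n - u m) ^+ 2 <= (4 * d + 2) * (n.+1%:R^-1 + m.+1%:R^-1).
  (* Parallelogram law around the midpoint [w], which lies in [X]. *)
  set w := (2^-1 : R[i]) *: (u n + u m).
  have Xw : X w.
    by rewrite /w -[_ *: _]addr0 -[u n]scale1r; apply: (XDZ) => //; apply: XDZ.
  have Ew : f - u n + (f - u m) = 2 *: (f - w).
    rewrite scalerBr scalerA mulfV ?pnatr_eq0 // scale1r scaler_nat mulr2n.
    by rewrite opprD addrACA.
  have := jnorm_parallelogram HK (f - u n) (f - u m).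
  have -> : f - u n - (f - u m) = u m - u n by rewrite opprB addrC addrA subrK.
  rewrite Ew jnormZ // normcMn normc1 (jdistC HK (u m)).
  have := dmin _ Xw; have := ud n; have := ud m.
  have /andP[en0 en1] := eps01 n; have /andP[em0 em1] := eps01 m.
  have := jnorm_ge0 ip J (f - u n); have := jnorm_ge0 ip J (f - u m).
  move: en0 en1 em0 em1; set en := n.+1%:R^-1; set em := m.+1%:R^-1.
  set a := nrm (f - u n); set b := nrm (f - u m); set c := nrm (f - w).
  move=> en0 en1 em0 em1 b0 a0 bd ad cd.
  have : a ^+ 2 <= (d + en) ^+ 2 by rewrite ler_pXn2r ?nnegrE //; lra.
  have : b ^+ 2 <= (d + em) ^+ 2 by rewrite ler_pXn2r ?nnegrE //; lra.
  have : d ^+ 2 <= c ^+ 2 by rewrite ler_pXn2r ?nnegrE //; lra.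
  nra.
move=> e e0; have K0 : 0 < 2 * (4 * d + 2) by lra.
have [N Ne] := exists_invSn_lt (divr_gt0 (exprn_gt0 2 e0) K0).
exists N => n m Nn Nm; rewrite -(@ltr_pXn2r _ 2) ?nnegrE ?jnorm_ge0 ?ltW //.
apply: le_lt_trans (gap n m) _; move: Ne; rewrite ltr_pdivlMr // => Ne.
have d2 : 0 <= 4 * d + 2 by lra.
apply: le_lt_trans (ler_wpM2l d2 (lerD (invSn_le R Nn) (invSn_le R Nm))) _.
suff -> : (4 * d + 2) * (N.+1%:R^-1 + N.+1%:R^-1) = N.+1%:R^-1 * (2 * (4 * d + 2)) by [].
ring.
Qed.

Lemma exists_jnorm_minimizer (X : set V) f : closed_subspace ip J X ->
  exists2 p, X p & forall w, X w -> nrm (f - p) <= nrm (f - w).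
Proof.
move=> [[X0 XDZ] cX]; set E := [set nrm (f - x) | x in X].
have E0 : E !=set0 by exists (nrm (f - 0)), 0.
have Elb : lbound E 0 by move=> _ [x _ <-]; apply: jnorm_ge0.
have dmin w : X w -> inf E <= nrm (f - w) by move=> Xw; apply: ge_inf; [exists 0 | exists w].
have /choice [u Xu] n : exists x, X x /\ nrm (f - x) <= inf E + n.+1%:R^-1.
  have n_gt0 : 0 < n.+1%:R^-1 :> R by rewrite invr_gt0 ltr0Sn.
  have [_ [x Xx <-] lt] := inf_adherent n_gt0 (conj E0 (ex_intro _ 0 Elb)).
  by exists x; split => //; apply: ltW.
have d0 : 0 <= inf E by apply: lb_le_inf.
have [p up] := jcauchy_cvg HK (minimizing_jcauchy (conj X0 XDZ) d0 dmin
  (fun n => proj1 (Xu n)) (fun n => proj2 (Xu n))).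
have Xp : X p by apply: (cX u) => // n; case: (Xu n).
exists p => // w Xw; apply: le_trans (dmin _ Xw); apply/ler_addgt0Pr => e e0.
have e2 : 0 < e / 2 by rewrite divr_gt0.
have [N1 N1e] := exists_invSn_lt e2; have [N2 N2e] := up _ e2; set n := maxn N1 N2.
have := ler_jnormD HK (f - u n) (u n - p); rewrite addrA subrK.
have : nrm (f - u n) <= inf E + e / 2.
  apply: le_trans (proj2 (Xu n)) _; rewrite lerD2l ltW //.
  exact: le_lt_trans (invSn_le R (leq_maxl N1 N2)) N1e.
have := N2e n (leq_maxr _ _); lra.
Qed.

Lemma is_proj_exists (X : set V) f : closed_subspace ip J X -> exists p, is_proj X f p.
Proof.
move=> cX; have [p Xp pmin] := exists_jnorm_minimizer f cX.
by exists p; split => // y Xy; apply: (minimizer_jorth _ Xp Xy pmin); case: cX.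
Qed.

Lemma is_proj_uniq (X : set V) f p q : Defs.subspace X ->
  is_proj X f p -> is_proj X f q -> p = q.
Proof.
move=> [_ XDZ] [Xp fp] [Xq fq]; apply/eqP; rewrite -subr_eq0; apply/eqP/(jip_eq0 HK).
have Xqp : X (p - q) by rewrite addrC -scaleN1r; apply: XDZ.
have E : p - q = (f - q) - (f - p) by rewrite opprB [RHS]addrC addrA subrK.
by rewrite {1}E (formBl (jipDZl HK)) fp ?fq // subrr.
Qed.

Lemma projP (X : set V) f : closed_subspace ip J X -> is_proj X f (proj ip J X f).
Proof. by move=> cX; apply: xgetPex; apply: is_proj_exists. Qed.

Lemma proj_eq (X : set V) f p : Defs.subspace X -> is_proj X f p -> proj ip J X f = p.
Proof.
move=> sX fp; apply: (is_proj_uniq sX _ fp).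
by apply: (@xgetPex _ 0 (is_proj X f)); exists p.
Qed.

Lemma proj_id (X : set V) f : Defs.subspace X -> X f -> proj ip J X f = f.
Proof.
move=> sX Xf; apply: proj_eq => //; split => // x _.
by rewrite subrr (form0l (jipDZl HK)).
Qed.

End Projection.

Section GramOperator.
Variables (R : realType) (V : lmodType R[i]) (ip : V -> V -> R[i]) (J : V -> V).
Hypothesis HK : krein_space ip J.
Variable M : set V.
Hypothesis cM : closed_subspace ip J M.
Local Notation jp := (jip ip J).
Local Notation nrm := (jnorm ip J).
Local Notation s f := (Re (ip f f)).

Definition gram f := proj ip J M (J f).

Definition gram_range : set V := [set gram f | f in M].

Lemma gramP f : is_proj ip J M (J f) (gram f).
Proof. by have := projP HK (J f) cM; rewrite /gram. Qed.

Lemma gram_in f : M (gram f).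
Proof. exact: (gramP f).1. Qed.

Lemma ip_gram f g : M g -> ip f g = jp (gram f) g.
Proof.
move=> Mg; have := (gramP f).2 g Mg; rewrite (formBl (jipDZl HK)) (ip_jip HK).
by move/eqP; rewrite subr_eq0 => /eqP.
Qed.

Lemma gramDZ a x y : gram (a *: x + y) = a *: gram x + gram y.
Proof.
have [sM _] := cM; have [_ MDZ] := sM.
apply: (proj_eq HK sM); split; first by apply: MDZ; apply: gram_in.
move=> w Mw; have -> : J (a *: x + y) - (a *: gram x + gram y) =
    a *: (J x - gram x) + (J y - gram y) by rewrite (JDZ HK) scalerBr opprD addrACA.
by rewrite (jipDZl HK) !(gramP _).2 // mulr0 addr0.
Qed.

Lemma gram_isotropic f : isotropic_part ip M f -> gram f = 0.
Proof.
move=> [_ f_orth]; have [sM _] := cM; apply: (proj_eq HK sM).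
split => [|x Mx]; first by case: sM.
by rewrite subr0 -(ip_jip HK) f_orth.
Qed.

Lemma proj_gram (X : set V) f : closed_subspace ip J X -> X `<=` M ->
  proj ip J X (J f) = proj ip J X (gram f).
Proof.
move=> cX XM; have [Xp p_orth] := projP HK (J f) cX.
have [sX _] := cX; apply/esym/(proj_eq HK sX).
split => // x Xx; have -> : gram f - proj ip J X (J f) =
    (J f - proj ip J X (J f)) - (J f - gram f) by rewrite opprB [RHS]addrC addrA subrK.
by rewrite (formBl (jipDZl HK)) p_orth // (gramP f).2 ?subrr //; apply: XM.
Qed.

Lemma Re_ip_proj_Jimage (X : set V) f : closed_subspace ip J X -> X `<=` M -> M f ->
  Re `|ip (proj ip J (Jimage J M) (proj ip J X (J (proj ip J M f)))) f|
  = nrm (proj ip J X (gram f)) ^+ 2.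
Proof.
move=> cX XM Mf; rewrite (proj_id HK _ Mf); last by case: cM.
set y := proj ip J X (J f); have [Xy y_orth] := projP HK (J f) cX.
have [_ Jy_orth] := projP HK y (Jimage_closed_subspace HK cM).
set a := proj ip J (Jimage J M) y.
have JMf : Jimage J M (J f) by exists f.
have Ea : ip a f = jp a (J f) by rewrite /jip (ipJ HK) (JK HK).
have E1 : jp a (J f) = jp y (J f).
  by apply/eqP; rewrite eq_sym -subr_eq0 -(formBl (jipDZl HK)) Jy_orth.
have E2 : jp y (J f) = jp y y.
  apply/eqP; rewrite -subr_eq0 -(formBr (jipDZl HK) (jipC HK)) (jipC HK).
  by rewrite y_orth // conjC0.
rewrite Ea E1 E2 (jip_sqr_jnorm HK) ger0_norm ?lecR ?sqr_ge0 //.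
by rewrite /y (proj_gram _ cX XM).
Qed.

Lemma krein_sum_gram (I : choiceType) (W : I -> set V) (v : I -> R) f :
  (forall i, closed_subspace ip J (W i)) -> (forall i, W i `<=` M) -> M f ->
  krein_sum ip J W v M f = fusion_sum ip J W v (gram f).
Proof.
move=> cW WM Mf; congr esum; apply: funext => i.
by rewrite Re_ip_proj_Jimage.
Qed.

Hypothesis s_ge0 : forall g, M g -> 0 <= s g.

Lemma Re_ip_CauchySchwarz x y : M x -> M y -> Re (ip x y) ^+ 2 <= s x * s y.
Proof. by case: cM => sM _; apply: (Re_form_CauchySchwarz (ipDZl HK) (ipC HK) sM). Qed.

Lemma sqr_jnorm_gram f : nrm (gram f) ^+ 2 = Re (ip f (gram f)).
Proof. by rewrite (ip_gram _ (gram_in f)) sqr_jnorm. Qed.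

Lemma Re_ip_diag_le f : s f <= nrm f ^+ 2.
Proof.
rewrite expr2; apply: le_trans (normc_ip_le HK f f).
exact: le_trans (ler_norm _) (Re_le_normc _).
Qed.

Lemma sqr_jnorm_gram_le f : M f -> nrm (gram f) ^+ 2 <= s f.
Proof.
move=> Mf; have := Re_ip_CauchySchwarz Mf (gram_in f); rewrite -sqr_jnorm_gram.
have := Re_ip_diag_le (gram f); have := s_ge0 Mf.
set N := nrm (gram f) ^+ 2; have : 0 <= N by apply: sqr_ge0.
nra.
Qed.

Lemma sqr_jnorm_gram_ge (c : R) f : 0 < c -> M f -> c * nrm f ^+ 2 <= s f ->
  c * s f <= nrm (gram f) ^+ 2.
Proof.
move=> c0 Mf pos_f; set N := nrm (gram f) ^+ 2.
have sf0 : 0 <= s f by apply: le_trans pos_f; exact: mulr_ge0 (ltW c0) (sqr_ge0 _).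
have sf_le : s f <= nrm (gram f) * nrm f.
  rewrite (ip_gram _ Mf); apply: le_trans (normc_jip_le HK _ _).
  exact: le_trans (ler_norm _) (Re_le_normc _).
have sf2 : s f ^+ 2 <= N * nrm f ^+ 2.
  by rewrite -exprMn ler_pXn2r ?nnegrE ?mulr_ge0 ?jnorm_ge0.
have : c * s f * s f <= N * s f.
  rewrite -mulrA -expr2; apply: le_trans (ler_wpM2l (ltW c0) sf2) _.
  by rewrite mulrCA; apply: ler_wpM2l => //; apply: exprn_ge0; apply: jnorm_ge0.
have [->|sf_gt0] := eqVneq (s f) 0.
  by rewrite !mulr0 => _; apply: exprn_ge0; apply: jnorm_ge0.
by rewrite ler_pM2r // lt0r sf_gt0.
Qed.

Lemma sqr_jnorm_gram_le_Re_gram (A C : R) h : 0 < A -> 0 <= C -> M h ->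
  A * s h <= C * nrm (gram h) ^+ 2 -> A * nrm (gram h) ^+ 2 <= C * s (gram h).
Proof.
move=> A0 C0 Mh low; set g := gram h; set N := nrm g ^+ 2.
have := Re_ip_CauchySchwarz Mh (gram_in h); rewrite -sqr_jnorm_gram -/g -/N => cs.
have sg0 := s_ge0 (gram_in h); have sh0 := s_ge0 Mh.
have [N0|N_gt0] := eqVneq N 0; first by rewrite N0 mulr0 mulr_ge0.
have : A * N ^+ 2 <= C * s g * N.
  apply: le_trans (ler_wpM2l (ltW A0) cs) _.
  by rewrite mulrA; apply: le_trans (ler_wpM2r sg0 low) _; rewrite mulrAC.
by rewrite expr2 mulrA ler_pM2r // lt0r N_gt0 sqr_ge0.
Qed.

End GramOperator.

Section FrameBounds.
Variables (R : realType) (V : lmodType R[i]) (ip : V -> V -> R[i]) (J : V -> V).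
Hypothesis HK : krein_space ip J.
Variables (I : choiceType) (W : I -> set V) (v : I -> R) (M : set V).
Hypothesis cW : forall i, closed_subspace ip J (W i).
Hypothesis cM : closed_subspace ip J M.
Hypothesis WM : forall i, W i `<=` M.
Local Notation jp := (jip ip J).
Local Notation nrm := (jnorm ip J).
Local Notation s f := (Re (ip f f)).
Local Notation gram := (gram ip J M).
Local Notation D := (deficiency ip J M).
Local Notation Rg := (gram_range ip J M).

Lemma krein_sum_ge0 f : (0 <= krein_sum ip J W v M f)%E.
Proof.
apply: esum_ge0 => i _; rewrite lee_fin mulr_ge0 ?sqr_ge0 //.
by have := normr_ge0 (ip (proj ip J (Jimage J M) (proj ip J (W i) (J (proj ip J M f)))) f);
  rewrite lecE => /andP[].
Qed.

Lemma gram_range_subspace : Defs.subspace Rg.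
Proof.
have [[M0 MDZ] _] := cM; split.
  exists 0 => //; apply: (gram_isotropic HK cM); split => // g _.
  exact: (form0l (ipDZl HK)).
move=> a _ _ [x Mx <-] [y My <-]; exists (a *: x + y); first exact: MDZ.
exact: (gramDZ HK cM).
Qed.

Lemma deficiency_sub_jclosure_gram : D `<=` jclosure ip J Rg.
Proof.
have cRg : closed_subspace ip J (jclosure ip J Rg).
  exact: conj (jclosure_subspace HK gram_range_subspace) (@jclosure_closed _ _ _ _ HK Rg).
have RgM : jclosure ip J Rg `<=` M.
  by apply: (jclosure_min HK) => [_ [h _ <-]|]; [apply: (gram_in HK cM) | case: cM].
(* [f - p] is J-orthogonal to the range of G, hence [.,.]-orthogonal to M. *)
move=> f [Mf f_orth]; have [Rp p_orth] := projP HK f cRg.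
set p := proj ip J _ f in Rp p_orth *.
have [[_ MDZ] _] := cM.
have Mq : M (f - p) by rewrite addrC -scaleN1r; apply: MDZ => //; apply: RgM.
have q_iso : isotropic_part ip M (f - p).
  split => // x Mx; rewrite (ipC HK) (ip_gram HK cM _ Mq) (jipC HK) p_orth ?conjC0 //.
  by apply: (sub_jclosure HK); exists x.
suff /(jip_eq0 HK)/eqP : jp (f - p) (f - p) = 0 by rewrite subr_eq0 => /eqP ->.
by rewrite {1}(formBl (jipDZl HK)) f_orth // (jipC HK) p_orth // conjC0 subrr.
Qed.

Lemma deficiency_uniformly_J_positive :
  bessel_family ip J W v -> krein_frame_bounds ip J W v M ->
  uniformly_J_positive ip J D.
Proof.
move=> [C C0 bessel] [A [B [A0 AB bounds]]].
have s_ge0 g : M g -> 0 <= s g.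
  move=> Mg; have := le_trans (krein_sum_ge0 g) (bounds g Mg).2.
  by rewrite lee_fin pmulr_rge0 // (lt_le_trans A0 AB).
have low h : M h -> A * s h <= C * nrm (gram h) ^+ 2.
  move=> Mh; have := (bounds h Mh).1; rewrite (krein_sum_gram HK cM v cW WM Mh).
  by move=> /le_trans /(_ (bessel (gram h))); rewrite lee_fin.
have q_lip f g : A * nrm f ^+ 2 - C * s f - (A * nrm g ^+ 2 - C * s g) <=
    (A + C) * nrm (f - g) * (nrm f + nrm g).
  have := Re_form_diag_lipschitz (jipDZl HK) (normc_jip_le HK) (jipC HK) f g.
  have := Re_form_diag_lipschitz (ipDZl HK) (normc_ip_le HK) (ipC HK) f g.
  rewrite -!(sqr_jnorm HK) !ler_norml => /andP[h1 _] /andP[_ h2].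
  have := ler_wpM2l (ltW A0) h2; have := ler_wpM2l (ltW C0) h1; lra.
exists (A / C); first by rewrite divr_gt0.
move=> f /deficiency_sub_jclosure_gram Rf.
have : A * nrm f ^+ 2 - C * s f <= 0.
  apply: (jclosure_le0 HK _ q_lip _ Rf); first by rewrite addr_ge0 ?ltW.
  move=> _ [h Mh <-]; rewrite subr_le0.
  exact: (sqr_jnorm_gram_le_Re_gram HK cM s_ge0 A0 (ltW C0) Mh (low h Mh)).
by rewrite subr_le0 mulrAC ler_pdivrMr // [s f * C]mulrC.
Qed.

Lemma isotropic_decomposition f : M f ->
  exists2 d, D d & isotropic_part ip M (f - d).
Proof.
move=> Mf; have cM0 : closed_subspace ip J (isotropic_part ip M).
  exact: closed_subspaceI cM (korth_closed_subspace (ipDZl HK) (normc_ip_le HK) M).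
have [M0p p_orth] := projP HK f cM0; set p := proj ip J _ f in M0p p_orth.
have [[_ MDZ] _] := cM.
exists (f - p); last by rewrite opprB addrC subrK.
split; last by move=> x /p_orth.
by rewrite addrC -scaleN1r; apply: MDZ => //; case: M0p.
Qed.

Lemma ip_addr_isotropic d f0 : M d -> isotropic_part ip M f0 ->
  ip (d + f0) (d + f0) = ip d d.
Proof.
move=> Md [Mf0 f0_orth].
rewrite (formDl (ipDZl HK)) !(formDr (ipDZl HK) (ipC HK)) (ipC HK f0 d).
by rewrite (f0_orth d Md) (f0_orth f0 Mf0) conjC0 !addr0.
Qed.

Lemma krein_frame_bounds_of_fusion_frame :
  fusion_frame_for ip J W v M -> uniformly_J_positive ip J D ->
  krein_frame_bounds ip J W v M.
Proof.
move=> [A' [B' [A'0 A'B' frame]]] [c c0 Dpos].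
have reduce f : M f -> exists2 d, D d & gram f = gram d /\ s f = s d.
  move=> Mf; have [d Dd iso] := isotropic_decomposition Mf; exists d => //.
  have Ef : f = d + (f - d) by rewrite addrC subrK.
  have Md : M d by case: Dd.
  split; rewrite Ef; last by rewrite ip_addr_isotropic.
  rewrite -[d in d + _]scale1r (gramDZ HK cM) scale1r.
  by rewrite (gram_isotropic HK cM iso) addr0.
have s_ge0 f : M f -> 0 <= s f.
  move=> /reduce [d Dd [_ ->]]; apply: le_trans (Dpos d Dd).
  exact: mulr_ge0 (ltW c0) (sqr_ge0 _).
have gram_bounds f : M f -> c * s f <= nrm (gram f) ^+ 2 <= s f.
  move=> Mf; have [d Dd [-> ->]] := reduce f Mf; have Md : M d by case: Dd.
  rewrite (sqr_jnorm_gram_le HK cM s_ge0 Md) andbT.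
  exact (sqr_jnorm_gram_ge HK cM c0 Md (Dpos d Dd)).
exists (A' * c), (Num.max B' (A' * c)); split.
- exact: mulr_gt0.
- by rewrite le_max lexx orbT.
move=> f Mf; rewrite (krein_sum_gram HK cM v cW WM Mf).
have [lo hi] := frame _ (gram_in HK cM f).
have /andP[g_lo g_hi] := gram_bounds f Mf.
split.
- by apply: le_trans lo; rewrite lee_fin -mulrA ler_pM2l.
- apply: le_trans hi _; rewrite lee_fin.
  apply: le_trans (ler_wpM2l (le_trans (ltW A'0) A'B') g_hi) _.
  by rewrite ler_wpM2r ?s_ge0 // le_max lexx.
Qed.

End FrameBounds.

Section ClosedSum.
Variables (R : realType) (V : lmodType R[i]) (ip : V -> V -> R[i]) (J : V -> V).
Hypothesis HK : krein_space ip J.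
Variables (I : choiceType) (W : I -> set V).
Hypothesis cW : forall i, closed_subspace ip J (W i).

Lemma sum_span_subspace : Defs.subspace (sum_span W).
Proof.
split.
  have idx0 : 'I_0 -> I by case.
  by exists 0%N, idx0, (fun _ => 0); split; [case | rewrite big_ord0].
move=> a _ _ [n1 [i1 [w1 [Ww1 ->]]]] [n2 [i2 [w2 [Ww2 ->]]]].
exists (n1 + n2)%N, (fun k => match split k with inl p => i1 p | inr q => i2 q end).
exists (fun k => match split k with inl p => a *: w1 p | inr q => w2 q end); split.
  move=> k; case: (split k) => [p|q] //; have [[W0 WDZ] _] := cW (i1 p).
  by rewrite -[_ *: _]addr0; apply: WDZ.
rewrite big_split_ord /= scaler_sumr; congr (_ + _); apply: eq_bigr => k _.
  by rewrite (unsplitK (inl k) : split (lshift n2 k) = inl k).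
by rewrite (unsplitK (inr k) : split (rshift n1 k) = inr k).
Qed.

Lemma closed_sum_closed_subspace : closed_subspace ip J (closed_sum ip J W).
Proof.
exact (conj (jclosure_subspace HK sum_span_subspace) (jclosure_closed HK (S:=_))).
Qed.

Lemma sub_closed_sum i : W i `<=` closed_sum ip J W.
Proof.
move=> x Wx; apply: (sub_jclosure HK); exists 1%N, (fun _ => i), (fun _ => x).
by split => //; rewrite big_ord1.
Qed.

End ClosedSum.

Theorem theorem3p13 (R : realType) (V : lmodType R[i])
    (ip : V -> V -> R[i]) (J : V -> V)
    (I : choiceType) (W : I -> set V) (v : I -> R) :
  krein_space ip J ->
  (forall i, closed_subspace ip J (W i)) ->
  (forall i, 0 < v i) ->
  bessel_family ip J W v ->
  let M := closed_sum ip J W in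
  let D := deficiency ip J M in
  (krein_frame_bounds ip J W v M ->
     [/\ closed_subspace ip J D, D `<=` M & uniformly_J_positive ip J D]) /\
  (fusion_frame_for ip J W v M -> uniformly_J_positive ip J D ->
     krein_frame_bounds ip J W v M).
Proof.
move=> HK cW _ bessel M D.
have cM : closed_subspace ip J M := closed_sum_closed_subspace HK cW.
have WM : forall i, W i `<=` M := sub_closed_sum HK (W := W).
split=> [bounds|]; last exact (krein_frame_bounds_of_fusion_frame HK cW cM WM).
split; last exact (deficiency_uniformly_J_positive HK cW cM WM bessel bounds).
- exact (closed_subspaceI cM
    (korth_closed_subspace (jipDZl HK) (normc_jip_le HK) (isotropic_part ip M))).
- by move=> f [].
Qed.
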